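(* Let $\mathfrak{A}$ be a $\sigma$-algebra (abstract, i.e. a $\sigma$-complete Boolean algebra) and let $\mathcal{S}_b(\mathbb{C},\mathfrak{A})$ be the set of all bounded complex spectral families in $\mathfrak{A}$. Then the map $f_\ast:\mathcal{S}_b(\mathbb{C},\mathfrak{A})\to C(\mathcal{Q}(\mathfrak{A}))$, $E\mapsto f_E$, is a bijection; consequently $\mathcal{S}_b(\mathbb{C},\mathfrak{A})$, equipped with the operations transported by $f_\ast$ (i.e. $E+F:=f_\ast^{-1}(f_E+f_F)$, $EF:=f_\ast^{-1}(f_Ef_F)$, $\alpha E:=f_\ast^{-1}(\alpha f_E)$, $E^\ast:=f_\ast^{-1}(\overline{f_E})$, $|E|:=\|f_E\|_\infty$), is an abelian $C^\ast$-algebra $\ast$-isomorphic to $C(\mathcal{Q}(\mathfrak{A}))$.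
   Context: Infima/suprema over real index sets in $\mathfrak{A}$ are computed along countable dense sets. A complex spectral family in $\mathfrak{A}$ is a map $E:\mathbb{R}^2\to\mathfrak{A}$ with (i) $E_{\lambda_1,\lambda_2}\wedge E_{\mu_1,\mu_2}=E_{\min\{\lambda_1,\mu_1\},\min\{\lambda_2,\mu_2\}}$; (ii) $\bigwedge_{\lambda_1<\mu_1,\lambda_2<\mu_2}E_{\mu_1,\mu_2}=E_{\lambda_1,\lambda_2}$; (iii) $\bigwedge_\lambda E_{\lambda,\lambda_2}=0=\bigwedge_\lambda E_{\lambda_1,\lambda}$ and $\bigvee_{\lambda_1,\lambda_2}E_{\lambda_1,\lambda_2}=1$; bounded means there are $m,b$ with $E=0$ whenever some coordinate is $\le m$ and $E=1$ when both coordinates are $\ge b$. The Stone spectrum $\mathcal{Q}(\mathfrak{A})$ is the set of maximal dual ideals (maximal nonempty upward closed subsets not containing $0$, closed under finite meets) with the topology generated by $\{\mathfrak{B}\mid a\in\mathfrak{B}\}$, $a\in\mathfrak{A}$. For such $E$, $f_E=f_{E,1}+if_{E,2}$ where $f_{E,1}(\mathfrak{B})=\inf\{\lambda\mid\exists\mu:E_{\lambda,\mu}\in\mathfrak{B}\}$ and $f_{E,2}(\mathfrak{B})=\inf\{\mu\mid\exists\lambda:E_{\lambda,\mu}\in\mathfrak{B}\}$. *)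

From HB Require Import structures.
From mathcomp Require Import all_boot all_order all_algebra.
From mathcomp Require Import complex.
From mathcomp Require Import all_classical all_reals.
Import Order.TTheory GRing.Theory Num.Theory.
Import ComplexField.

Set Implicit Arguments.
Unset Strict Implicit.
Unset Printing Implicit Defensive.

Local Open Scope ring_scope.
Local Open Scope classical_set_scope.
Local Open Scope complex_scope.

Section Defs.

(* A Boolean algebra is a complemented distributive lattice with top   *)
(* and bottom (ctbDistrLatticeType).                                   *)

Context {d : Order.disp_t} {A : ctbDistrLatticeType d}.

Definition is_lub (S : set A) (x : A) : Prop :=
  (forall y, S y -> (y <= x)%O) /\ (forall z, (forall y, S y -> (y <= z)%O) -> (x <= z)%O).

Definition is_glb (S : set A) (x : A) : Prop :=
  (forall y, S y -> (x <= y)%O) /\ (forall z, (forall y, S y -> (z <= y)%O) -> (z <= x)%O).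

(* every countable family has a supremum (hence, by complementation,   *)
(* also an infimum); we require both explicitly                       *)
Definition sigma_complete : Prop :=
  forall u : nat -> A, (exists x, is_lub (range u) x) /\ (exists x, is_glb (range u) x).

Context {R : realType}.

(* A complex spectral family: E : R^2 -> A, written curried. *)
Definition complex_spectral_family (E : R -> R -> A) : Prop :=
  [/\
      (forall l1 l2 m1 m2, (E l1 l2 `&` E m1 m2)%O = E (Num.min l1 m1) (Num.min l2 m2)),
      (* (ii) right continuity *)
      (forall l1 l2,
          is_glb [set E m1 m2 | m1 in [set m | l1 < m] & m2 in [set m | l2 < m]] (E l1 l2)),
      (forall l2, is_glb [set E l l2 | l in setT] \bot%O) /\
      (forall l1, is_glb [set E l1 l | l in setT] \bot%O)
    & is_lub [set E l1 l2 | l1 in setT & l2 in setT] \top%O].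

Definition bounded_spectral_family (E : R -> R -> A) : Prop :=
  exists m b : R,
    (forall l1 l2, (l1 <= m \/ l2 <= m) -> E l1 l2 = \bot%O) /\
    (forall l1 l2, (b <= l1 /\ b <= l2) -> E l1 l2 = \top%O).

Definition bounded_complex_spectral_family (E : R -> R -> A) : Prop :=
  complex_spectral_family E /\ bounded_spectral_family E.

Definition dual_ideal (B : set A) : Prop :=
  [/\ B !=set0,
      (forall a b, B a -> (a <= b)%O -> B b),
      ~ B \bot%O
    & (forall a b, B a -> B b -> B (a `&` b)%O)].

Definition maximal_dual_ideal (B : set A) : Prop :=
  dual_ideal B /\ (forall C, dual_ideal C -> B `<=` C -> C = B).

End Defs.

Definition stone_spectrum {d : Order.disp_t} (A : ctbDistrLatticeType d) : Type :=
  {B : set A | maximal_dual_ideal B}.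

Section Stone.
Context {d : Order.disp_t} {A : ctbDistrLatticeType d}.

(* The topology on Q(A) generated by the sets {B | a \in B}: a set O is *)
(* open iff each of its points lies in a finite intersection of such    *)
(* generating sets contained in O (empty intersection = whole space).   *)
Definition stone_open (O : set (stone_spectrum A)) : Prop :=
  forall x, O x -> exists s : seq A,
    (forall a, a \in s -> proj1_sig x a) /\
    (forall y : stone_spectrum A, (forall a, a \in s -> proj1_sig y a) -> O y).

Context {R : realType}.

Definition complex_open (U : set R[i]) : Prop :=
  forall z, U z -> exists2 e : R, 0 < e & forall w, `|w - z| < e%:C -> U w.

Definition stone_continuous (g : stone_spectrum A -> R[i]) : Prop :=
  forall U, complex_open U -> stone_open (g @^-1` U).

Definition fE1 (E : R -> R -> A) (B : stone_spectrum A) : R :=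
  inf [set l : R | exists mu : R, proj1_sig B (E l mu)].

Definition fE2 (E : R -> R -> A) (B : stone_spectrum A) : R :=
  inf [set mu : R | exists l : R, proj1_sig B (E l mu)].

Definition fE (E : R -> R -> A) (B : stone_spectrum A) : R[i] :=
  Complex (fE1 E B) (fE2 E B).

Definition sup_bounded (g : stone_spectrum A -> R[i]) : Prop :=
  exists M : R, forall x, `|g x| <= M%:C.

(* A set X of complex functions on Q(A) is a unital commutative          *)
(* C*-algebra of functions under pointwise operations, complex           *)
(* conjugation as involution and the sup norm: it contains the constants *)
(* 1 (and 0), is closed under +, *, scalar multiplication and conjugation,*)
(* all its elements have finite sup norm, and it is complete for the sup *)
(* norm.  (Commutativity, submultiplicativity and the C*-identity        *)
(* ||g^* g|| = ||g||^2 hold automatically for pointwise operations and   *)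
(* the sup norm.)                                                        *)
Definition function_Cstar_algebra (X : set (stone_spectrum A -> R[i])) : Prop :=
  [/\ X (fun=> 1) /\ X (fun=> 0),
      (forall f g, X f -> X g -> X (fun x => f x + g x)) /\
      (forall f g, X f -> X g -> X (fun x => f x * g x)),
      (forall (a : R[i]) f, X f -> X (fun x => a * f x)) /\
      (forall f, X f -> X (fun x => (f x)^*)),
      (forall f, X f -> sup_bounded f)
    & (forall u : nat -> stone_spectrum A -> R[i],
         (forall n, X (u n)) ->
         (forall e : R, 0 < e -> exists N, forall m n, (N <= m)%N -> (N <= n)%N ->
              forall x, `|u m x - u n x| < e%:C) ->
         exists2 g, X g & forall e : R, 0 < e -> exists N, forall n, (N <= n)%N ->
              forall x, `|u n x - g x| < e%:C)].

End Stone.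

From HB Require Import structures.
From mathcomp Require Import all_boot all_order all_algebra.
From mathcomp Require Import complex.
From mathcomp Require Import all_classical all_reals.
From mathcomp Require Import topology normedtype sequences.
From mathcomp Require Import interval_inference lra.
Import Order.TTheory Order.CTBDistrLatticeTheory GRing.Theory Num.Theory.
Import ComplexField.
Import numFieldNormedType.Exports.
Local Open Scope ring_scope.
Local Open Scope classical_set_scope.
Local Open Scope complex_scope.

(* A bounded complex spectral family is determined by its two marginals [l |-> E l b] and *)
(* [mu |-> E b mu] (for [b] an upper bound), and [f_E] is the pair of their spectral values *)
(* [x |-> inf {l | E l b \in x}].  The spectral value of a monotone family is continuous on *)
(* the Stone spectrum, because [x] contains [E l b] just above the value and its complement *)
(* just below.  Injectivity follows from right continuity and the Stone representation *)
(* ([a <= b] as soon as every maximal dual ideal containing [a] contains [b]).  For *)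
(* surjectivity, compactness of the Stone spectrum gives for [p < q] an element containing *)
(* [{h <= p}] and contained in [{h < q}]; sigma-completeness turns countable meets of these *)
(* into a real spectral family with spectral value [h], and the meets of the families for *)
(* [Re g] and [Im g] form the required [E].  The C*-algebra part reduces to the closure of *)
(* real-valued continuous functions under ring operations and uniform limits. *)

Section StoneSpectrum.
Context {d : Order.disp_t} {A : ctbDistrLatticeType d}.
Local Notation S := (stone_spectrum A).
Local Open Scope order_scope.
Implicit Types (B F : set A) (a b : A).

Lemma dual_ideal_top {B} : dual_ideal B -> B \top.
Proof. by case=> -[a Ba] up _ _; apply: up Ba _; exact: lex1. Qed.

Lemma dual_ideal_up {B a b} : dual_ideal B -> B a -> a <= b -> B b.
Proof. by case=> _ up _ _; exact: up. Qed.

Lemma dual_ideal_bot {B} : dual_ideal B -> ~ B \bot.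
Proof. by case. Qed.

Lemma dual_idealI {B a b} : dual_ideal B -> B (a `&` b) <-> B a /\ B b.
Proof.
move=> dB; split; last by case: dB => _ _ _ mI [] /mI; apply.
by move=> Bab; split; apply: dual_ideal_up dB Bab _; rewrite ?leIl ?leIr.
Qed.

Lemma dual_ideal_compl {B a} : dual_ideal B -> B a -> ~ B (~` a).
Proof.
move=> dB Ba Bc; apply: (dual_ideal_bot dB).
by rewrite -(meetxC a); apply/dual_idealI.
Qed.

Lemma dual_ideal_meet_seq {B} (s : seq A) (f : A -> A) : dual_ideal B ->
  B (\meet_(a <- s) f a) <-> (forall a, a \in s -> B (f a)).
Proof.
move=> dB; elim: s => [|b s IH]; first by rewrite big_nil; split=> // _; exact: dual_ideal_top.
rewrite big_cons dual_idealI // IH; split.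
  by case=> Bb Bs a; rewrite inE => /orP[/eqP->|/Bs].
by move=> Bs; split=> [|a sa]; apply: Bs; rewrite inE ?eqxx ?sa ?orbT.
Qed.

(* Otherwise the dual ideal generated by [B] and [a] would properly extend [B]. *)
Lemma maximal_dual_idealC {B a} : maximal_dual_ideal B -> ~ B a -> B (~` a).
Proof.
move=> [dB maxB] nBa; apply: contrapT => nBc.
pose C := [set c | exists2 b, B b & b `&` a <= c].
have dC : dual_ideal C.
  split.
  - by exists a; exists \top; [exact: dual_ideal_top | rewrite meet1x].
  - by move=> x y [b Bb bx] xy; exists b => //; exact: le_trans xy.
  - move=> [b Bb]; rewrite lex0 => /eqP ba0; apply: nBc; apply: dual_ideal_up dB Bb _.
    by rewrite -[b]meetx1 -(joinxC a) meetUr ba0 join0x leIr.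
  - move=> x y [b Bb bx] [c Bc cy]; exists (b `&` c); first exact/dual_idealI.
    by rewrite lexI (le_trans _ bx) ?(le_trans _ cy) // leI2 ?leIl ?leIr.
have BC : B `<=` C by move=> b Bb; exists b => //; exact: leIl.
by apply: nBa; rewrite -(maxB C dC BC); exists \top; [exact: dual_ideal_top | rewrite meet1x].
Qed.

Lemma maximal_dual_idealU {B a b} : maximal_dual_ideal B -> B (a `|` b) -> B a \/ B b.
Proof.
move=> mB Bab; apply: contrapT => /not_orP[/(maximal_dual_idealC mB) Ba /(maximal_dual_idealC mB) Bb].
by apply: (dual_ideal_compl mB.1 Bab); rewrite complU; apply/dual_idealI => //; exact: mB.1.
Qed.

Lemma maximal_dual_ideal_join_seq {B} {s : seq A} {P : pred A} : maximal_dual_ideal B ->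
  B (\join_(a <- s | P a) a) -> exists2 a, a \in s & P a /\ B a.
Proof.
move=> mB; elim: s => [|a s IH]; first by rewrite big_nil => /(dual_ideal_bot mB.1).
rewrite big_cons; case: ifP => [Pa /(maximal_dual_idealU mB)[Ba|]|_]; first by exists a; rewrite ?mem_head.
all: by move=> /IH[b sb Pb]; exists b; rewrite // inE sb orbT.
Qed.

(* Zorn's lemma, applied to the dual ideals containing [F] together with the empty set, *)
(* so that the empty chain has an upper bound too. *)
Lemma maximal_dual_ideal_ext {F} : dual_ideal F -> exists2 B, maximal_dual_ideal B & F `<=` B.
Proof.
move=> dF; pose P C := C = set0 \/ (dual_ideal C /\ F `<=` C).
have [G GP totG|M [PM Mmax]] := @Zorn_bigcup A P.
- have [allE|/existsNP[X0 /not_implyP[GX0 X0n]]] := pselect (forall X, G X -> X = set0).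
    by left; apply/seteqP; split=> x // [X /allE ->].
  have [//|[dX0 FX0]] := GP X0 GX0.
  right; split; last by move=> x Fx; exists X0 => //; exact: FX0.
  have GPd X x : G X -> X x -> dual_ideal X.
    by move=> GX Xx; have [X0e|[]//] := GP X GX; rewrite X0e in Xx.
  split.
  + by case: dX0 => -[x Xx] _ _ _; exists x; exists X0.
  + by move=> a b [X GX Xa] ab; exists X => //; exact: dual_ideal_up (GPd X a GX Xa) Xa ab.
  + by move=> [X GX Xb]; exact: dual_ideal_bot (GPd X _ GX Xb) Xb.
  + move=> a b [X GX Xa] [Y GY Yb].
    have [XY|YX] := totG X Y GX GY.
    * by exists Y => //; apply/(dual_idealI (GPd Y b GY Yb)); split => //; exact: XY.
    * by exists X => //; apply/(dual_idealI (GPd X a GX Xa)); split => //; exact: YX.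
- have [M0|[dM FM]] := PM.
    case: (dF) => -[x Fx] _ _ _; exfalso; apply: (Mmax F); last by right; split.
    by rewrite M0; split=> [y //|/(_ x Fx)].
  exists M => //; split=> // C dC MC; apply: contrapT => CM.
  apply: (Mmax C); last by right; split => //; exact: subset_trans MC.
  by split=> // CsM; apply: CM; exact/seteqP.
Qed.

Lemma stone_point_dual_ideal (x : S) : dual_ideal (sval x).
Proof. exact: (proj2_sig x).1. Qed.

Lemma stone_point_maximal (x : S) : maximal_dual_ideal (sval x).
Proof. exact: proj2_sig x. Qed.

Lemma stone_le a b : (forall x : S, sval x a -> sval x b) -> a <= b.
Proof.
move=> ab; apply: contrapT => nab.
have dF : dual_ideal [set c | a `&` ~` b <= c].
  split.
  - by exists \top; exact: lex1.
  - by move=> x y /= h1 h2; exact: le_trans h2.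
  - rewrite /= lex0 => /eqP ab0; apply: nab.
    by rewrite -[a]meetx1 -(joinxC b) meetUr ab0 joinx0 leIr.
  - by move=> x y /= h1 h2; rewrite lexI h1 h2.
have [B mB FB] := maximal_dual_ideal_ext dF.
have /(dual_idealI mB.1)[Ba Bnb] := FB _ (lexx (a `&` ~` b)).
exact: dual_ideal_compl mB.1 (ab (exist _ B mB) Ba) Bnb.
Qed.

Lemma stone_finite_subcover (D : set A) :
  (forall x : S, exists2 a, D a & sval x a) ->
  exists s : seq A, (forall a, a \in s -> D a) /\ (forall x : S, exists2 a, a \in s & sval x a).
Proof.
move=> cov; apply: contrapT => ncov.
pose F := [set c | exists2 s : seq A, (forall a, a \in s -> D a) & \meet_(a <- s) ~` a <= c].
have dF : dual_ideal F.
  split.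
  - by exists \top; exists [::] => //; rewrite big_nil.
  - by move=> x y [s Ds sx] xy; exists s => //; exact: le_trans xy.
  - move=> [s Ds]; rewrite lex0 => /eqP s0; apply: ncov; exists s; split => // x.
    apply: contrapT => nx.
    have : sval x (\meet_(a <- s) ~` a).
      apply/(dual_ideal_meet_seq _ _ (stone_point_dual_ideal x)) => a sa.
      by apply: (maximal_dual_idealC (stone_point_maximal x)) => xa; apply: nx; exists a.
    by rewrite s0; exact: dual_ideal_bot (stone_point_dual_ideal x).
  - move=> x y [s Ds sx] [t Dt ty]; exists (s ++ t).
      by move=> a; rewrite mem_cat => /orP[/Ds|/Dt].
    by rewrite big_cat /= leI2.
have [B mB FB] := maximal_dual_ideal_ext dF.
have [a Da Ba] := cov (exist _ B mB).
apply: (dual_ideal_compl mB.1 Ba); apply: FB; exists [:: a].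
  by move=> c; rewrite inE => /eqP->.
by rewrite big_cons big_nil meetx1.
Qed.

End StoneSpectrum.

Section ComplexParts.
Context {R : rcfType}.
Implicit Types w z : R[i].

Lemma normc_ge_Im w : `|complex.Im w|%:C <= `|w|.
Proof. by case: w => a b; simpc; rewrite -sqrtr_sqr ler_wsqrtr // lerDr sqr_ge0. Qed.

Lemma normc_le_ReIm w : `|w| <= (`|complex.Re w| + `|complex.Im w|)%:C.
Proof.
case: w => a b; simpc => /=.
have -> : `|a| + `|b| = Num.sqrt ((`|a| + `|b|) ^+ 2) by rewrite sqrtr_sqr [RHS]ger0_norm ?addr_ge0.
apply: ler_wsqrtr.
by rewrite sqrrD !real_normK ?num_real // -addrA lerD2l lerDr mulrn_wge0 // mulr_ge0.
Qed.

Lemma ReB w z : complex.Re (w - z) = complex.Re w - complex.Re z.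
Proof. by case: w; case: z. Qed.

Lemma ImB w z : complex.Im (w - z) = complex.Im w - complex.Im z.
Proof. by case: w; case: z. Qed.

Lemma ReD w z : complex.Re (w + z) = complex.Re w + complex.Re z.
Proof. by case: w; case: z. Qed.

Lemma ImD w z : complex.Im (w + z) = complex.Im w + complex.Im z.
Proof. by case: w; case: z. Qed.

Lemma ReM w z : complex.Re (w * z) = complex.Re w * complex.Re z - complex.Im w * complex.Im z.
Proof. by case: w; case: z. Qed.

Lemma ImM w z : complex.Im (w * z) = complex.Re w * complex.Im z + complex.Im w * complex.Re z.
Proof. by case: w; case: z. Qed.

Lemma ReJ w : complex.Re w^* = complex.Re w.
Proof. by case: w. Qed.

Lemma ImJ w : complex.Im w^* = - complex.Im w.
Proof. by case: w. Qed.

End ComplexParts.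

Lemma complex_open_ball {R : realType} (z : R[i]) (e : R) :
  complex_open [set w | `|w - z| < e%:C].
Proof.
move=> w /= wz; have := wz; rewrite ltcE => /andP[_ wz'].
exists (e - complex.Re `|w - z|); first by rewrite subr_gt0.
move=> v /= vw.
have -> : e%:C = (e - complex.Re `|w - z|)%:C + `|w - z|.
  by rewrite -[X in _ + X]RRe_real ?normr_real // -rmorphD subrK.
apply: le_lt_trans (_ : `|v - z| <= `|v - w| + `|w - z|) _; last by rewrite ltrD2r.
by rewrite -{1}(subrK w v) -addrA ler_normD.
Qed.

Section StoneFunctions.
Context {d : Order.disp_t} {A : ctbDistrLatticeType d} {R : realType}.
Local Notation S := (stone_spectrum A).
Implicit Types (x y : S) (h : S -> R).

Definition real_stone_continuous h : Prop :=
  forall x (e : R), 0 < e -> exists2 a, sval x a & forall y, sval y a -> `|h y - h x| < e.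

Lemma stone_continuousP (g : S -> R[i]) : stone_continuous g <->
  real_stone_continuous (fun x => complex.Re (g x)) /\
  real_stone_continuous (fun x => complex.Im (g x)).
Proof.
split=> [gc|[cRe cIm] U oU x Ux].
  have near_gx x e : 0 < e ->
      exists2 a, sval x a & forall y, sval y a -> `|g y - g x| < e%:C.
    move=> e0; have [|s [xs sU]] := gc _ (complex_open_ball (g x) e) x.
      by rewrite /= subrr normr0 ltcR.
    exists (\meet_(a <- s) a)%O; first exact/(dual_ideal_meet_seq _ _ (stone_point_dual_ideal x)).
    move=> y /(dual_ideal_meet_seq _ _ (stone_point_dual_ideal y)) ys; exact: sU.
  split=> x e /(near_gx x)[a xa gxa]; exists a => // y /gxa; rewrite -ltcR.
    by rewrite -ReB; exact: le_lt_trans (normc_ge_Re _).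
  by rewrite -ImB; exact: le_lt_trans (normc_ge_Im _).
have [e e0 eU] := oU _ Ux; have e2 : 0 < e / 2 by rewrite divr_gt0.
have [a1 xa1 Ha1] := cRe x _ e2; have [a2 xa2 Ha2] := cIm x _ e2.
exists [:: a1; a2]; split=> [a|y ya]; first by rewrite !inE => /orP[]/eqP->.
apply: eU; apply: le_lt_trans (normc_le_ReIm _) _; rewrite ltcR ReB ImB.
have := Ha1 y (ya _ (mem_head _ _)); have := Ha2 y (ya a2 _); rewrite ?inE ?eqxx ?orbT //.
lra.
Qed.

Lemma real_stone_continuous_cst (c : R) : real_stone_continuous (fun=> c).
Proof.
move=> x e e0; exists \top%O; first exact: dual_ideal_top (stone_point_dual_ideal x).
by move=> y _; rewrite subrr normr0.
Qed.

Lemma real_stone_continuousN h : real_stone_continuous h ->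
  real_stone_continuous (fun x => - h x).
Proof.
move=> hc x e /(hc x)[a xa Ha]; exists a => // y /Ha.
by rewrite -opprD normrN.
Qed.

Lemma real_stone_continuousD h1 h2 : real_stone_continuous h1 -> real_stone_continuous h2 ->
  real_stone_continuous (fun x => h1 x + h2 x).
Proof.
move=> hc1 hc2 x e e0; have e2 : 0 < e / 2 by rewrite divr_gt0.
have [a1 xa1 Ha1] := hc1 x _ e2; have [a2 xa2 Ha2] := hc2 x _ e2.
exists (a1 `&` a2)%O; first exact/(dual_idealI (stone_point_dual_ideal x)).
move=> y /(dual_idealI (stone_point_dual_ideal y))[/Ha1 ya1 /Ha2 ya2].
rewrite opprD addrACA; apply: le_lt_trans (ler_normD _ _) _; lra.
Qed.

Lemma real_stone_continuousM h1 h2 : real_stone_continuous h1 -> real_stone_continuous h2 ->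
  real_stone_continuous (fun x => h1 x * h2 x).
Proof.
move=> hc1 hc2 x e e0.
pose K := `|h1 x| + `|h2 x| + 1.
have K0 : 0 < K by rewrite /K; have := normr_ge0 (h1 x); have := normr_ge0 (h2 x); lra.
pose dl := Num.min 1 (e / (2 * K)).
have dl0 : 0 < dl by rewrite lt_min ltr01 /= divr_gt0 // mulr_gt0.
have dl1 : dl <= 1 by rewrite ge_min lexx.
have dlK : dl * K <= e / 2.
  have : dl <= e / (2 * K) by rewrite ge_min lexx orbT.
  by rewrite ler_pdivlMr ?mulr_gt0 //; lra.
have [a1 xa1 Ha1] := hc1 x _ dl0; have [a2 xa2 Ha2] := hc2 x _ dl0.
exists (a1 `&` a2)%O; first exact/(dual_idealI (stone_point_dual_ideal x)).
move=> y /(dual_idealI (stone_point_dual_ideal y))[/Ha1 ya1 /Ha2 ya2].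
have -> : h1 y * h2 y - h1 x * h2 x = (h1 y - h1 x) * h2 y + h1 x * (h2 y - h2 x).
  by rewrite mulrBl mulrBr addrA subrK.
apply: le_lt_trans (ler_normD _ _) _; rewrite !normrM.
have h2y : `|h2 y| <= `|h2 x| + 1.
  by rewrite -[h2 y](subrK (h2 x)); apply: le_trans (ler_normD _ _) _; lra.
have t1 : `|h1 y - h1 x| * `|h2 y| <= dl * (`|h2 x| + 1) by rewrite ler_pM // ltW.
have t2 : `|h1 x| * `|h2 y - h2 x| <= `|h1 x| * dl by rewrite ler_wpM2l // ltW.
rewrite /K in dlK; lra.
Qed.

Lemma real_stone_continuous_bounded {h} : real_stone_continuous h ->
  exists M, forall x, `|h x| <= M.
Proof.
move=> hc; pose D := [set a : A | exists M, forall y, sval y a -> `|h y| <= M].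
have [|s [sD scov]] := stone_finite_subcover D.
  move=> x; have [a xa Ha] := hc x 1 ltr01; exists a => //.
  exists (`|h x| + 1) => y /Ha hy; rewrite -[h y](subrK (h x)).
  by apply: le_trans (ler_normD _ _) _; lra.
have [M HM] : exists M, forall a, a \in s -> forall y, sval y a -> `|h y| <= M.
  elim: s sD {scov} => [|a s IH] sD; first by exists 0.
  have [M1 H1] := sD a (mem_head _ _).
  have [|M2 H2] := IH; first by move=> b sb; apply: sD; rewrite inE sb orbT.
  exists (Num.max M1 M2) => b; rewrite inE => /orP[/eqP-> y /H1|/H2 H y /H].
    by rewrite le_max => ->.
  by rewrite le_max => ->; rewrite orbT.
by exists M => x; have [a sa xa] := scov x; exact: HM xa.
Qed.

Lemma real_stone_continuous_uniform_limit (u : nat -> S -> R) :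
  (forall n, real_stone_continuous (u n)) ->
  (forall e, 0 < e -> exists N, forall m n, (N <= m)%N -> (N <= n)%N ->
     forall x, `|u m x - u n x| < e) ->
  exists2 g, real_stone_continuous g &
    forall e, 0 < e -> exists N, forall n, (N <= n)%N -> forall x, `|u n x - g x| < e.
Proof.
move=> uc ucauchy.
have ucvg x : cvg (u^~ x @ \oo).
  apply/cauchy_cvgP/cauchy_exP => e /ucauchy[N HN].
  by exists (u N x); exists N => // n /= Nn; exact: HN.
pose g x := lim (u^~ x @ \oo).
have ug e : 0 < e -> exists N, forall n, (N <= n)%N -> forall x, `|u n x - g x| < e.
  move=> e0; have e2 : 0 < e / 2 by rewrite divr_gt0.
  have [N HN] := ucauchy _ e2; exists N => n Nn x.
  suff : `|u n x - g x| <= e / 2 by lra.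
  rewrite distrC ler_distl; apply/andP; split.
    apply: limr_ge (ucvg x) _; exists N => // m /= /(HN m n)/(_ Nn)/(_ x).
    by rewrite ltr_norml; lra.
  apply: limr_le (ucvg x) _; exists N => // m /= /(HN m n)/(_ Nn)/(_ x).
  by rewrite ltr_norml; lra.
exists g => // x e e0; have e3 : 0 < e / 3 by rewrite divr_gt0.
have [N HN] := ug _ e3; have [a xa Ha] := uc N x _ e3.
exists a => // y /Ha ya.
have gy := HN N (leqnn N) y; have gx := HN N (leqnn N) x.
move: gy gx ya; rewrite !ltr_norml => /andP[? ?] /andP[? ?] /andP[? ?].
apply/andP; split; lra.
Qed.

(* Compactness turns the pointwise choice between [h < q] and [p < h] near each point *)
(* into a finite one; the join of the chosen [h < q] pieces separates. *)
Lemma real_stone_continuous_separation {h p q} : real_stone_continuous h -> p < q ->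
  exists c : A, (forall x, h x <= p -> sval x c) /\ (forall x, sval x c -> h x < q).
Proof.
move=> hc pq.
pose below a := forall y, sval y a -> h y < q.
pose D := [set a | below a \/ forall y, sval y a -> p < h y].
have [|s [sD scov]] := stone_finite_subcover D.
  move=> x; have [hxq|qhx] := ltP (h x) q.
    have e0 : 0 < q - h x by rewrite subr_gt0.
    have [a xa Ha] := hc x _ e0; exists a => //; left => y /Ha.
    by rewrite ltr_norml => /andP[_ ?]; lra.
  have e0 : 0 < h x - p by rewrite subr_gt0; exact: lt_le_trans pq qhx.
  have [a xa Ha] := hc x _ e0; exists a => //; right => y /Ha.
  by rewrite ltr_norml => /andP[? _]; lra.
exists (\join_(a <- s | `[< below a >]) a)%O; split.
  move=> x hxp; have [a sa xa] := scov x.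
  have [ba|hp] := sD a sa; last by have := hp x xa; lra.
  apply: dual_ideal_up (stone_point_dual_ideal x) xa _.
  by apply: (joins_sup_seq (fun a => a) sa); apply/asboolP.
by move=> x /(maximal_dual_ideal_join_seq (stone_point_maximal x))[a _ [/asboolP ba /ba]].
Qed.

End StoneFunctions.

Section SpectralValue.
Context {d : Order.disp_t} {A : ctbDistrLatticeType d} {R : realType}.
Local Notation S := (stone_spectrum A).
Implicit Types (x : S) (F : R -> A).

Definition spectral_value F x : R := inf [set l | sval x (F l)].

Lemma spectral_valueE F x v : (forall l, v < l -> sval x (F l)) ->
  (forall l, sval x (F l) -> v <= l) -> spectral_value F x = v.
Proof.
move=> gt_mem mem_ge.
have ne : [set l | sval x (F l)] !=set0 by exists (v + 1); apply: gt_mem; rewrite ltrDl.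
apply/le_anti; rewrite lb_le_inf //= andbT leNgt; apply/negP => vlt.
have := ge_inf (ex_intro _ v mem_ge) (gt_mem ((v + spectral_value F x) / 2) _).
rewrite /spectral_value in vlt *; lra.
Qed.

Variables (F : R -> A) (m b : R).
Hypothesis F_homo : {homo F : l l' / l <= l' >-> (l <= l')%O}.
Hypothesis F_bot : F m = \bot%O.
Hypothesis F_top : F b = \top%O.

Lemma spectral_value_le x l : sval x (F l) -> spectral_value F x <= l.
Proof.
move=> xl; apply: ge_inf xl; exists m => l' /= xl'; rewrite leNgt; apply/negP => l'm.
have : sval x (F m) by apply: dual_ideal_up (stone_point_dual_ideal x) xl' (F_homo _ _ (ltW l'm)).
by rewrite F_bot; exact: dual_ideal_bot (stone_point_dual_ideal x).
Qed.

Lemma spectral_value_lt x l : spectral_value F x < l -> sval x (F l).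
Proof.
have xb : sval x (F b) by rewrite F_top; exact: dual_ideal_top (stone_point_dual_ideal x).
move=> /(inf_lt (ex_intro _ b xb))[l' /= xl' /ltW l'l].
exact: dual_ideal_up (stone_point_dual_ideal x) xl' (F_homo _ _ l'l).
Qed.

Lemma spectral_value_ge x l : sval x (~` F l)%O -> l <= spectral_value F x.
Proof.
move=> xc; apply: lb_le_inf; first by exists (spectral_value F x + 1); apply: spectral_value_lt; rewrite ltrDl.
move=> l' /= xl'; rewrite leNgt; apply/negP => /ltW l'l.
have xl : sval x (F l) := dual_ideal_up (stone_point_dual_ideal x) xl' (F_homo _ _ l'l).
exact: dual_ideal_compl (stone_point_dual_ideal x) xl xc.
Qed.

Lemma spectral_value_continuous : real_stone_continuous (spectral_value F).
Proof.
move=> x e e0; set v := spectral_value F x.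
have e2 : 0 < e / 2 by rewrite divr_gt0.
have xu : sval x (F (v + e / 2)) by apply: spectral_value_lt; rewrite ltrDl.
have xl : sval x (~` F (v - e / 2))%O.
  apply: maximal_dual_idealC (stone_point_maximal x) _ => /spectral_value_le.
  rewrite -/v; lra.
exists (F (v + e / 2) `&` ~` F (v - e / 2))%O; first exact/(dual_idealI (stone_point_dual_ideal x)).
move=> y /(dual_idealI (stone_point_dual_ideal y))[/spectral_value_le yu /spectral_value_ge yl].
rewrite ltr_norml; apply/andP; split; lra.
Qed.

End SpectralValue.

Section RealSpectralFamily.
Context {d : Order.disp_t} {A : ctbDistrLatticeType d} {R : realType}.
Local Notation S := (stone_spectrum A).

Lemma homo_meet_min {F : R -> A} : {homo F : l l' / l <= l' >-> (l <= l')%O} ->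
  forall l l', (F l `&` F l')%O = F (Num.min l l').
Proof.
move=> Fh l l'; have [ll'|/ltW l'l] := leP l l'; first exact/meet_l/Fh.
exact/meet_r/Fh.
Qed.

Lemma homo_top {F : R -> A} {b l} : {homo F : l l' / l <= l' >-> (l <= l')%O} ->
  F b = \top%O -> b <= l -> F l = \top%O.
Proof. by move=> Fh Fb bl; apply/eqP; rewrite -le1x -Fb Fh. Qed.

Lemma homo_bot {F : R -> A} {m l} : {homo F : l l' / l <= l' >-> (l <= l')%O} ->
  F m = \bot%O -> l <= m -> F l = \bot%O.
Proof. by move=> Fh Fm lm; apply/eqP; rewrite -lex0 -Fm Fh. Qed.

(* Together with monotonicity, the second clause is right continuity in the form of *)
(* axiom (ii). *)
Definition real_spectral_family (F : R -> A) : Prop :=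
  [/\ {homo F : l l' / l <= l' >-> (l <= l')%O},
      forall l z, (forall l', l < l' -> (z <= F l')%O) -> (z <= F l)%O,
      exists m, F m = \bot%O
    & exists b, F b = \top%O].

Section Resolution.
Variables (h : S -> R) (M : R) (c : R -> R -> A) (glb : (nat -> A) -> A).
Hypothesis h_bound : forall x, `|h x| <= M.
Hypothesis c_lo : forall x p q, p < q -> h x <= p -> sval x (c p q).
Hypothesis c_hi : forall x p q, p < q -> sval x (c p q) -> h x < q.
Hypothesis glbP : forall u, is_glb (range u) (glb u).

Let dl (n : nat) : R := n.+1%:R^-1.
Let dl_gt0 n : 0 < dl n. Proof. by rewrite invr_gt0 ltr0n. Qed.

(* The spectral projection of [h] for [(-oo, l]]: the meet of separators of [h <= p] *)
(* from [h >= q], with [l < p < q] decreasing to [l]. *)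
Definition resolution (l : R) : A := glb (fun n => c (l + dl n) (l + 2 * dl n)).

Lemma exists_dl_lt e : 0 < e -> exists n, dl n < e.
Proof. by move=> e0; have [N _ /(_ N (leqnn N)) /= hN] := near_infty_natSinv_lt (PosNum e0); exists N. Qed.

Lemma mem_resolution_le x l : sval x (resolution l) -> h x <= l.
Proof.
move=> xl; rewrite leNgt; apply/negP => lhx.
have [n hn] : exists n, dl n < (h x - l) / 2 by apply: exists_dl_lt; rewrite divr_gt0 ?subr_gt0.
have dln := dl_gt0 n.
have : sval x (c (l + dl n) (l + 2 * dl n)).
  by apply: dual_ideal_up (stone_point_dual_ideal x) xl _; apply: (glbP _).1; exists n.
have pq : l + dl n < l + 2 * dl n by lra.
by move=> /(c_hi x _ _ pq); lra.
Qed.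

Lemma c_le_resolution p q l : p < q -> q <= l -> (c p q <= resolution l)%O.
Proof.
move=> pq ql; apply: (glbP _).2 => _ [n _ <-] /=; apply: stone_le => x /(c_hi x _ _ pq) hq.
have dln := dl_gt0 n; by apply: (c_lo x); lra.
Qed.

Lemma mem_resolution_gt x l : h x < l -> sval x (resolution l).
Proof.
move=> hl; have hq : h x < (h x + l) / 2 by lra.
apply: dual_ideal_up (stone_point_dual_ideal x) (c_lo x _ _ hq (lexx _)) _.
by apply: c_le_resolution; lra.
Qed.

Lemma resolution_le_c l p q : l < p -> p < q -> (resolution l <= c p q)%O.
Proof.
move=> lp pq; apply: stone_le => x /(mem_resolution_le x) hl.
by apply: (c_lo x); lra.
Qed.

Lemma resolution_spectral_family : real_spectral_family resolution.
Proof.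
split.
- move=> l l'; rewrite le_eqVlt => /orP[/eqP-> //|ll'].
  by apply: stone_le => x /(mem_resolution_le x) hl; apply: (mem_resolution_gt x); lra.
- move=> l z zl; apply: (glbP _).2 => _ [n _ <-] /=; have dln := dl_gt0 n.
  have l_lt : l < l + dl n / 2 by lra.
  apply: le_trans (zl _ l_lt) _; apply: resolution_le_c; lra.
- exists (- M - 1); apply/eqP; rewrite -lex0; apply: stone_le => x /(mem_resolution_le x).
  by have := h_bound x; rewrite ler_norml; lra.
- exists (M + 1); apply/eqP; rewrite -le1x; apply: stone_le => x _; apply: (mem_resolution_gt x).
  by have := h_bound x; rewrite ler_norml; lra.
Qed.

Lemma spectral_value_resolution : spectral_value resolution = h.
Proof.
apply/funext => x; apply: spectral_valueE => l.
  exact: mem_resolution_gt.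
exact: mem_resolution_le.
Qed.

End Resolution.
End RealSpectralFamily.

Section ComplexSpectralFamily.
Context {d : Order.disp_t} {A : ctbDistrLatticeType d} {R : realType}.

Section Marginal.
Variables (E : R -> R -> A) (b : R).
Hypothesis E_meet : forall l1 l2 m1 m2,
  (E l1 l2 `&` E m1 m2)%O = E (Num.min l1 m1) (Num.min l2 m2).
Hypothesis E_top : E b b = \top%O.

Lemma complex_family_homo l1 l2 m1 m2 : l1 <= m1 -> l2 <= m2 -> (E l1 l2 <= E m1 m2)%O.
Proof. by move=> lm1 lm2; apply/meet_idPl; rewrite E_meet !min_l. Qed.

Lemma complex_family_le_marginal l mu : (E l mu <= E l b)%O.
Proof.
rewrite -[E l mu]meetx1 -E_top E_meet.
by apply: complex_family_homo; rewrite ge_min lexx ?orbT.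
Qed.

Lemma fE1_marginal : fE1 E = spectral_value (fun l => E l b).
Proof.
apply/funext => x; rewrite /fE1 /spectral_value; congr inf.
apply/seteqP; split=> l /=; last by exists b.
case=> mu xmu; exact: dual_ideal_up (stone_point_dual_ideal x) xmu (complex_family_le_marginal _ _).
Qed.

End Marginal.

Lemma fE_marginals {E : R -> R -> A} {b} :
  (forall l1 l2 m1 m2, (E l1 l2 `&` E m1 m2)%O = E (Num.min l1 m1) (Num.min l2 m2)) ->
  E b b = \top%O ->
  fE E = fun x => Complex (spectral_value (fun l => E l b) x) (spectral_value (E b) x).
Proof.
move=> E_meet E_top; rewrite /fE (fE1_marginal _ _ E_meet E_top).
by have -> : fE2 E = fE1 (fun l mu => E mu l) by []; rewrite (fE1_marginal _ b).
Qed.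

Section Bounded.
Variables (E : R -> R -> A) (m b : R).
Hypothesis E_meet : forall l1 l2 m1 m2,
  (E l1 l2 `&` E m1 m2)%O = E (Num.min l1 m1) (Num.min l2 m2).
Hypothesis E_bot : forall l1 l2, l1 <= m \/ l2 <= m -> E l1 l2 = \bot%O.
Hypothesis E_top : forall l1 l2, b <= l1 /\ b <= l2 -> E l1 l2 = \top%O.

Let Ebb : E b b = \top%O. Proof. exact: E_top (conj (lexx b) (lexx b)). Qed.
Let E1_homo : {homo (fun l => E l b) : l l' / l <= l' >-> (l <= l')%O}.
Proof. by move=> l l' ll'; apply: complex_family_homo. Qed.
Let E2_homo : {homo E b : l l' / l <= l' >-> (l <= l')%O}.
Proof. by move=> l l' ll'; apply: complex_family_homo. Qed.
Let E1_bot : E m b = \bot%O. Proof. by apply: E_bot; left. Qed.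
Let E2_bot : E b m = \bot%O. Proof. by apply: E_bot; right. Qed.

Lemma fE_continuous_bounded : stone_continuous (fE E).
Proof.
apply/stone_continuousP; rewrite (fE_marginals E_meet Ebb) /=.
by split; apply: (@spectral_value_continuous _ _ _ _ m b).
Qed.

Lemma Re_fE_le x l mu : sval x (E l mu) -> complex.Re (fE E x) <= l.
Proof.
rewrite (fE_marginals E_meet Ebb) /= => xl; apply: (spectral_value_le _ _ E1_homo E1_bot).
exact: dual_ideal_up (stone_point_dual_ideal x) xl (complex_family_le_marginal _ _ E_meet Ebb _ _).
Qed.

Lemma Im_fE_le x l mu : sval x (E l mu) -> complex.Im (fE E x) <= mu.
Proof.
rewrite (fE_marginals E_meet Ebb) /= => xl; apply: (spectral_value_le _ _ E2_homo E2_bot).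
apply: dual_ideal_up (stone_point_dual_ideal x) xl _.
exact: (complex_family_le_marginal (fun l mu => E mu l) _ (fun _ _ _ _ => E_meet _ _ _ _) Ebb).
Qed.

Lemma Re_fE_lt x l : complex.Re (fE E x) < l -> sval x (E l b).
Proof. by rewrite (fE_marginals E_meet Ebb) /=; exact: (spectral_value_lt _ _ E1_homo Ebb). Qed.

Lemma Im_fE_lt x mu : complex.Im (fE E x) < mu -> sval x (E b mu).
Proof. by rewrite (fE_marginals E_meet Ebb) /=; exact: (spectral_value_lt _ _ E2_homo Ebb). Qed.

End Bounded.
End ComplexSpectralFamily.

Section Bijection.
Context {d : Order.disp_t} {A : ctbDistrLatticeType d} {R : realType}.
Local Notation S := (stone_spectrum A).
Implicit Types (E F : R -> R -> A).

Lemma fE_continuous E : bounded_complex_spectral_family E -> stone_continuous (fE E).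
Proof. by case=> [[E_meet _ _ _] [m [b [E_bot E_top]]]]; exact: fE_continuous_bounded E_meet E_bot E_top. Qed.

(* Axiom (ii) for [F] reduces the claim to [E l1 l2 <= F m1 m2] for [l1 < m1], [l2 < m2], *)
(* which is checked at every point of the Stone spectrum. *)
Lemma fE_le E F : bounded_complex_spectral_family E -> bounded_complex_spectral_family F ->
  fE E = fE F -> forall l1 l2, (E l1 l2 <= F l1 l2)%O.
Proof.
case=> [[E_meet _ _ _] [m [b [E_bot E_top]]]] [[F_meet F_rc _ _] [_ [b' [_ F_top]]]] EF l1 l2.
apply: (F_rc l1 l2).2 => _ [m1 lm1 [m2 lm2 <-]].
apply: stone_le => x xE.
have x1 : sval x (F m1 b').
  apply: (Re_fE_lt _ _ F_meet F_top); rewrite -EF.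
  exact: le_lt_trans (Re_fE_le _ _ _ E_meet E_bot E_top x _ _ xE) lm1.
have x2 : sval x (F b' m2).
  apply: (Im_fE_lt _ _ F_meet F_top); rewrite -EF.
  exact: le_lt_trans (Im_fE_le _ _ _ E_meet E_bot E_top x _ _ xE) lm2.
have : sval x (F m1 b' `&` F b' m2)%O by exact/(dual_idealI (stone_point_dual_ideal x)).
rewrite F_meet => /dual_ideal_up; apply; first exact: stone_point_dual_ideal.
by apply: complex_family_homo; rewrite // ge_min lexx ?orbT.
Qed.

Lemma fE_inj E F : bounded_complex_spectral_family E -> bounded_complex_spectral_family F ->
  fE E = fE F -> E = F.
Proof.
move=> bE bF EF; apply/funext => l1; apply/funext => l2.
by apply/le_anti; rewrite !fE_le.
Qed.

Lemma meet_complex_spectral_family (F1 F2 : R -> A) :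
  real_spectral_family F1 -> real_spectral_family F2 ->
  bounded_complex_spectral_family (fun l mu => F1 l `&` F2 mu)%O.
Proof.
case=> F1h F1rc [m1 F1m] [b1 F1b] [F2h F2rc [m2 F2m] [b2 F2b]].
pose b := Num.max b1 b2.
have F1t l : b <= l -> F1 l = \top%O by move=> bl; apply: homo_top F1h F1b (le_trans _ bl); rewrite le_max lexx.
have F2t l : b <= l -> F2 l = \top%O by move=> bl; apply: homo_top F2h F2b (le_trans _ bl); rewrite le_max lexx orbT.
split; last first.
  exists (Num.min m1 m2), b; split=> [l1 l2 [l1m|l2m]|l1 l2 [bl1 bl2]].
  - by rewrite (homo_bot F1h F1m) ?meet0x // (le_trans l1m) // ge_min lexx.
  - by rewrite (homo_bot F2h F2m) ?meetx0 // (le_trans l2m) // ge_min lexx orbT.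
  - by rewrite F1t // F2t // meetx1.
split.
- by move=> l1 l2 n1 n2; rewrite meetACA (homo_meet_min F1h) (homo_meet_min F2h).
- move=> l1 l2; split=> [_ [n1 ln1 [n2 ln2 <-]]|z zle].
    by rewrite leI2 // ?F1h ?F2h // ltW.
  rewrite lexI; apply/andP; split.
    apply: F1rc => l' ll'; apply: (@le_trans _ _ (F1 l' `&` F2 (l2 + 1))%O); last exact: leIl.
    by apply: zle; exists l' => //; exists (l2 + 1) => //=; rewrite ltrDl.
  apply: F2rc => l' ll'; apply: (@le_trans _ _ (F1 (l1 + 1) `&` F2 l')%O); last exact: leIr.
  by apply: zle; exists (l1 + 1); rewrite /= ?ltrDl //; exists l'.
- split=> l; split=> [? _|z zle]; rewrite ?le0x //.
    by rewrite -F1m; apply: le_trans (zle _ (ex_intro2 _ _ m1 I erefl)) (leIl _ _).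
  by rewrite -F2m; apply: le_trans (zle _ (ex_intro2 _ _ m2 I erefl)) (leIr _ _).
- split=> [? _|z zle]; rewrite ?lex1 //.
  rewrite -(F1t b) // -(meetx1 (F1 b)) -(F2t b) //; apply: zle.
  by exists b => //; exists b.
Qed.

Lemma fE_meet (F1 F2 : R -> A) : real_spectral_family F1 -> real_spectral_family F2 ->
  fE (fun l mu => F1 l `&` F2 mu)%O = fun x => Complex (spectral_value F1 x) (spectral_value F2 x).
Proof.
case=> F1h _ _ [b1 F1b] [F2h _ _ [b2 F2b]]; pose b := Num.max b1 b2.
have F1t : F1 b = \top%O by apply: homo_top F1h F1b _; rewrite le_max lexx.
have F2t : F2 b = \top%O by apply: homo_top F2h F2b _; rewrite le_max lexx orbT.
rewrite (@fE_marginals _ _ _ _ b); last by rewrite F1t F2t meetx1.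
  apply/funext => x /=; congr Complex; congr spectral_value; apply/funext => l.
    by rewrite F2t meetx1.
  by rewrite F1t meet1x.
by move=> l1 l2 n1 n2; rewrite meetACA (homo_meet_min F1h) (homo_meet_min F2h).
Qed.

Lemma real_stone_continuous_resolution (hA : sigma_complete (A := A)) {h : S -> R} :
  real_stone_continuous h -> exists2 F, real_spectral_family F & spectral_value F = h.
Proof.
move=> hc; have [M hM] := real_stone_continuous_bounded hc.
have sep (pq : R * R) : exists c : A, pq.1 < pq.2 ->
    (forall x, h x <= pq.1 -> sval x c) /\ (forall x, sval x c -> h x < pq.2).
  have [lt|ge] := ltP pq.1 pq.2; last by exists \top%O.
  by have [c sc] := real_stone_continuous_separation hc lt; exists c.
have [c cP] := choice sep.
have [glb glbP] := choice (fun u : nat -> A => (hA u).2).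
have c_lo x p q : p < q -> h x <= p -> sval x (c (p, q)) by move=> /(cP (p, q))[+ _]; apply.
have c_hi x p q : p < q -> sval x (c (p, q)) -> h x < q by move=> /(cP (p, q))[_]; apply.
exists (resolution (fun p q => c (p, q)) glb).
  exact: resolution_spectral_family hM c_lo c_hi glbP.
exact: spectral_value_resolution c_lo c_hi glbP.
Qed.

Lemma fE_surj (hA : sigma_complete (A := A)) (g : S -> R[i]) : stone_continuous g ->
  exists2 E, bounded_complex_spectral_family E & fE E = g.
Proof.
move=> /stone_continuousP[cRe cIm].
have [F1 sF1 eF1] := real_stone_continuous_resolution hA cRe.
have [F2 sF2 eF2] := real_stone_continuous_resolution hA cIm.
exists (fun l mu => F1 l `&` F2 mu)%O; first exact: meet_complex_spectral_family.
by rewrite fE_meet // eF1 eF2; apply/funext => x; case: (g x).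
Qed.

End Bijection.


Section StoneCstar.
Context {d : Order.disp_t} {A : ctbDistrLatticeType d} {R : realType}.
Local Notation S := (stone_spectrum A).
Implicit Types f g : S -> R[i].

Lemma stone_continuous_cst (c : R[i]) : stone_continuous (fun _ : S => c).
Proof. by apply/stone_continuousP; split; exact: real_stone_continuous_cst. Qed.

Lemma stone_continuousD f g : stone_continuous f -> stone_continuous g ->
  stone_continuous (fun x => f x + g x).
Proof.
move=> /stone_continuousP[f1 f2] /stone_continuousP[g1 g2]; apply/stone_continuousP.
rewrite (funext (fun x => ReD (f x) (g x))) (funext (fun x => ImD (f x) (g x))).
by split; apply: real_stone_continuousD.
Qed.

Lemma stone_continuousM f g : stone_continuous f -> stone_continuous g ->
  stone_continuous (fun x => f x * g x).
Proof.
move=> /stone_continuousP[f1 f2] /stone_continuousP[g1 g2]; apply/stone_continuousP.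
rewrite (funext (fun x => ReM (f x) (g x))) (funext (fun x => ImM (f x) (g x))).
by split; apply: real_stone_continuousD; do ?apply: real_stone_continuousN;
  exact: real_stone_continuousM.
Qed.

Lemma stone_continuousJ f : stone_continuous f -> stone_continuous (fun x => (f x)^*).
Proof.
move=> /stone_continuousP[f1 f2]; apply/stone_continuousP.
rewrite (funext (fun x => ReJ (f x))) (funext (fun x => ImJ (f x))).
by split; last exact: real_stone_continuousN.
Qed.

Lemma stone_continuous_sup_bounded f : stone_continuous f -> sup_bounded f.
Proof.
move=> /stone_continuousP[/real_stone_continuous_bounded[M1 hM1] /real_stone_continuous_bounded[M2 hM2]].
exists (M1 + M2) => x; apply: le_trans (normc_le_ReIm _) _.
by rewrite lecR lerD.
Qed.

Lemma stone_continuous_uniform_limit (u : nat -> S -> R[i]) :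
  (forall n, stone_continuous (u n)) ->
  (forall e : R, 0 < e -> exists N, forall m n, (N <= m)%N -> (N <= n)%N ->
     forall x, `|u m x - u n x| < e%:C) ->
  exists2 g, stone_continuous g &
    forall e : R, 0 < e -> exists N, forall n, (N <= n)%N -> forall x, `|u n x - g x| < e%:C.
Proof.
move=> uc ucauchy.
have [g1 g1c ug1] : exists2 g1, real_stone_continuous g1 &
    forall e, 0 < e -> exists N, forall n, (N <= n)%N -> forall x, `|complex.Re (u n x) - g1 x| < e.
  apply: real_stone_continuous_uniform_limit => [n|e /ucauchy[N HN]].
    by have /stone_continuousP[] := uc n.
  exists N => m n Nm Nn x; rewrite -ltcR -ReB.
  exact: le_lt_trans (normc_ge_Re _) (HN m n Nm Nn x).
have [g2 g2c ug2] : exists2 g2, real_stone_continuous g2 &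
    forall e, 0 < e -> exists N, forall n, (N <= n)%N -> forall x, `|complex.Im (u n x) - g2 x| < e.
  apply: real_stone_continuous_uniform_limit => [n|e /ucauchy[N HN]].
    by have /stone_continuousP[] := uc n.
  exists N => m n Nm Nn x; rewrite -ltcR -ImB.
  exact: le_lt_trans (normc_ge_Im _) (HN m n Nm Nn x).
exists (fun x => Complex (g1 x) (g2 x)); first exact/stone_continuousP.
move=> e e0; have e2 : 0 < e / 2 by rewrite divr_gt0.
have [N1 HN1] := ug1 _ e2; have [N2 HN2] := ug2 _ e2.
exists (maxn N1 N2) => n; rewrite geq_max => /andP[N1n N2n] x.
apply: le_lt_trans (normc_le_ReIm _) _; rewrite ltcR ReB ImB /=.
by have := HN1 n N1n x; have := HN2 n N2n x; lra.
Qed.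

Lemma stone_continuous_Cstar_algebra : function_Cstar_algebra (@stone_continuous d A R).
Proof.
split.
- by split; exact: stone_continuous_cst.
- by split; [exact: stone_continuousD | exact: stone_continuousM].
- by split=> [a f fc|]; [apply: stone_continuousM fc; exact: stone_continuous_cst | exact: stone_continuousJ].
- exact: stone_continuous_sup_bounded.
- exact: stone_continuous_uniform_limit.
Qed.

End StoneCstar.

Theorem theorem2p23 (R : realType) (d : Order.disp_t) (A : ctbDistrLatticeType d)
    (hA : @sigma_complete d A) :
  [/\ (* f_* maps S_b(C, A) into C(Q(A)) *)
      (forall E : R -> R -> A, bounded_complex_spectral_family E ->
         stone_continuous (fE E)),
      (* f_* is injective on S_b(C, A) *)
      (forall E F : R -> R -> A,
         bounded_complex_spectral_family E -> bounded_complex_spectral_family F ->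
         fE E = fE F -> E = F),
      (* f_* is surjective onto C(Q(A)) *)
      (forall g : stone_spectrum A -> R[i], stone_continuous g ->
         exists2 E : R -> R -> A, bounded_complex_spectral_family E & fE E = g)
    & (* C(Q(A)) is an abelian C*-algebra, so the transported structure   *)
      (* on S_b(C, A) is an abelian C*-algebra *-isomorphic to it via f_* *)
      function_Cstar_algebra (@stone_continuous d A R)].
Proof.
split.
- exact: fE_continuous.
- exact: fE_inj.
- exact: fE_surj.
- exact: stone_continuous_Cstar_algebra.
Qed.
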